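(* Let $F\neq\mathbb{C}$ be a local field of characteristic zero, with uniformizer $\varpi$ when $F$ is non-archimedean. For $\phi\in\mathcal{S}(F^2)$ define, for $a\in F^\times$, $$H(a)=\begin{cases}\sum_{b\in\mathbb{Z}}|\phi(a\varpi^b,\varpi^{-b})|, & F\ne\mathbb{R},\\ \int_{\mathbb{R}_+^\times}|\phi(at,t^{-1})|\,d^\times t, & F=\mathbb{R}.\end{cases}$$ Then there exist a finite index set $I$, Schwartz functions $A_i,B_i\in\mathcal{S}(F)$ ($i\in I$) and a constant $C>0$, depending on $\phi$, such that for all $a\in F^\times$ $$H(a)\le\sum_{i\in I}|A_i(a)|+\big|\log|a|\big|\sum_{i\in I}|B_i(a)|+C.$$ *)

From Stdlib Require Import Reals.
From Coquelicot Require Import Coquelicot.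
From mathcomp Require Import all_boot all_algebra.
Open Scope R_scope.

Definition schwartzR (f : R -> R) : Prop :=
  (forall (k : nat) (x : R), ex_derive_n f k x) /\
  (forall (k m : nat), exists M : R, forall x : R, Rabs (x ^ m * Derive_n f k x) <= M).

Definition schwartzC (f : R -> C) : Prop :=
  schwartzR (fun x => Re (f x)) /\ schwartzR (fun x => Im (f x)).

(* Iterated partial derivatives of f : R -> R -> R along a word
   (true = d/dx, false = d/dy; the head letter is applied last). *)
Fixpoint pderiv (w : list bool) (f : R -> R -> R) : R -> R -> R :=
  match w with
  | nil => f
  | b :: w' =>
      let g := pderiv w' f in
      if b then fun x y => Derive (fun t => g t y) x
           else fun x y => Derive (fun t => g x t) y
  end.

Definition smooth2 (f : R -> R -> R) : Prop :=
  forall (w : list bool) (x y : R),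
    ex_derive (fun t => pderiv w f t y) x /\
    ex_derive (fun t => pderiv w f x t) y /\
    filterlim (fun p : R * R => pderiv w f (fst p) (snd p))
              (locally (x, y)) (locally (pderiv w f x y)).

Definition schwartzR2 (f : R -> R -> R) : Prop :=
  smooth2 f /\
  (forall (w : list bool) (m n : nat), exists M : R,
     forall x y : R, Rabs (x ^ m * y ^ n * pderiv w f x y) <= M).

Definition schwartzC2 (f : R -> R -> C) : Prop :=
  schwartzR2 (fun x y => Re (f x y)) /\ schwartzR2 (fun x y => Im (f x y)).

(* H(a) = int_{R_+^x} |phi(a t, t^{-1})| d^x t,  d^x t = dt / t. *)
Definition H_real (phi : R -> R -> C) (a : R) : R :=
  RInt_gen (fun t => Cmod (phi (a * t) (/ t)) / t)
           (at_right 0) (Rbar_locally p_infty).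

Section NA.
Variable F : fieldType.
Variable abs : F -> R.

Definition dist (x y : F) : R := abs (GRing.add x (GRing.opp y)).

Definition is_uniformizer (w : F) : Prop :=
  0 < abs w < 1 /\
  forall x : F, x <> (@GRing.zero F) -> exists k : Z, abs x = powerRZ (abs w) k.

(* F is a non-archimedean local field with (an) absolute value abs:
   abs is a non-trivial discrete ultrametric absolute value, F is complete,
   and the residue field O/m is finite. *)
Definition is_na_local_field : Prop :=
  (forall x, 0 <= abs x) /\
  (forall x, abs x = 0 <-> x = (@GRing.zero F)) /\
  (forall x y, abs (GRing.mul x y) = abs x * abs y) /\
  (forall x y, abs (GRing.add x y) <= Rmax (abs x) (abs y)) /\
  (exists w, is_uniformizer w) /\
  (forall u : nat -> F,
     (forall eps, 0 < eps -> exists N : nat, forall m n : nat,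
        (N <= m)%nat -> (N <= n)%nat -> dist (u m) (u n) < eps) ->
     exists l : F, forall eps, 0 < eps -> exists N : nat, forall n : nat,
        (N <= n)%nat -> dist (u n) l < eps) /\
  (exists s : list F, (forall r, List.In r s -> abs r <= 1) /\
     forall x, abs x <= 1 -> exists r, List.In r s /\ dist x r < 1).

Definition char_zero : Prop :=
  forall n : nat, (0 < n)%N -> GRing.natmul ((@GRing.one F)) n <> (@GRing.zero F).

Definition schwartzF (f : F -> C) : Prop :=
  (forall x, exists r, 0 < r /\ forall y, dist x y < r -> f y = f x) /\
  (exists R0 : R, forall x, R0 < abs x -> f x = 0%C).

Definition schwartzF2 (f : F -> F -> C) : Prop :=
  (forall x1 x2, exists r, 0 < r /\ forall y1 y2,
      Rmax (dist x1 y1) (dist x2 y2) < r -> f y1 y2 = f x1 x2) /\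
  (exists R0 : R, forall x1 x2, R0 < Rmax (abs x1) (abs x2) -> f x1 x2 = 0%C).

(* H(a) = sum_{b in Z} |phi(a w^b, w^{-b})|, split as b >= 0 and b = -(n+1). *)
Definition H_na (w : F) (phi : F -> F -> C) (a : F) : R :=
  Series (fun n : nat =>
    Cmod (phi (GRing.mul a (GRing.exp w n)) (GRing.inv (GRing.exp w n)))) +
  Series (fun n : nat =>
    Cmod (phi (GRing.mul a (GRing.inv (GRing.exp w n.+1))) (GRing.exp w n.+1))).
End NA.
Arguments dist {F}.
Arguments is_uniformizer {F}.
Arguments is_na_local_field {F}.
Arguments schwartzF {F}.
Arguments schwartzF2 {F}.
Arguments H_na {F}.

From Pilot Require Import Defs.
From Stdlib Require Import Reals Lra Lia Psatz FunctionalExtensionality Classical ClassicalEpsilon.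
From Coquelicot Require Import Coquelicot.
From mathcomp Require Import all_boot all_algebra zify.
Open Scope R_scope.

(* Real case: the Schwartz decay [|phi(x,y)| (1+x^2)(1+y^2) <= K] bounds the
   integrand of H(a) by [K t / ((1+t^2)(1+a^2 t^2))], whose integral over
   (0,oo) is [K log(1/a^2) / (2(1-a^2))].  This is bounded for |a| >= 1/2 and
   at most [(4/3) K |log|a||] otherwise, so A = 0 and B = 2K exp(-x^2) work.

   Non-archimedean case: phi is bounded.  Otherwise, covering a ball of radius
   |v| by the finitely many balls of radius |v w| given by the residues, one
   finds nested unbounded balls of radii |v w^n|; their centres converge by
   completeness, and phi is constant near the limit, a contradiction.  Since
   phi also vanishes outside a ball of radius R, the terms b >= 0 of H(a) vanish
   beyond a bound independent of a, and at most about
   log(R/|a|) / log(1/|w|) terms b < 0 survive, none when |a| > R. *)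

Inductive poly_gauss : (R -> R) -> Prop :=
| poly_gauss_base : poly_gauss (fun x => exp (- (x * x)))
| poly_gauss_mulx f : poly_gauss f -> poly_gauss (fun x => x * f x)
| poly_gauss_add f g : poly_gauss f -> poly_gauss g -> poly_gauss (fun x => f x + g x)
| poly_gauss_scal c f : poly_gauss f -> poly_gauss (fun x => c * f x).

Lemma poly_gauss_is_derive f :
  poly_gauss f -> exists2 f', poly_gauss f' & forall x, is_derive f x (f' x).
Proof.
elim=> [|{}f Pf [f' Pf' Df]|{}f g _ [f' Pf' Df] _ [g' Pg' Dg]|c {}f _ [f' Pf' Df]].
- exists (fun x => -2 * (x * exp (- (x * x)))).
    by apply poly_gauss_scal, poly_gauss_mulx, poly_gauss_base.
  by move=> x; auto_derive; [|ring].
- exists (fun x => f x + x * f' x); first exact/poly_gauss_add/poly_gauss_mulx.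
  move=> x; have := is_derive_mult _ _ x _ _ (is_derive_id x) (Df x) Rmult_comm.
  by rewrite /plus /mult /= /mult /= Rmult_1_l.
- exists (fun x => f' x + g' x); first exact: poly_gauss_add.
  by move=> x; apply: is_derive_plus.
- exists (fun x => c * f' x); first exact: poly_gauss_scal.
  by move=> x; apply: is_derive_scal.
Qed.

Lemma poly_gauss_Derive_n f k :
  poly_gauss f ->
  (forall x, ex_derive_n f k x) /\ exists2 g, poly_gauss g & Derive_n f k = g.
Proof.
move=> Pf; elim: k => [|k [_ [g Pg Eg]]]; first by split=> //; exists f.
have [g' Pg' Dg] := poly_gauss_is_derive _ Pg.
split=> [x|]; rewrite /= Eg; first by exists (g' x).
exists g' => //; apply: functional_extensionality => x; exact: is_derive_unique.
Qed.

Lemma exp_pow (a : R) (n : nat) : exp a ^ n = exp (INR n * a).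
Proof.
elim: n => [|n IH]; first by rewrite /= Rmult_0_l exp_0.
by rewrite S_INR [_ ^ _]/= IH -exp_plus; f_equal; ring.
Qed.

(* From [1 + x^2 <= m exp (x^2 / m)], raised to the power m. *)
Lemma gauss_moment_le (m : nat) (x : R) : Rabs (x ^ m * exp (- (x * x))) <= INR m ^ m.
Proof.
rewrite Rabs_mult (Rabs_pos_eq (exp _)); last exact/Rlt_le/exp_pos.
case: m => [|m].
  rewrite /= Rabs_R1 Rmult_1_l exp_Ropp -Rinv_1.
  by apply: Rinv_le_contravar; [lra|]; have := exp_ineq1_le (x * x); nra.
set n := m.+1; have Hn : 1 <= INR n by rewrite /n S_INR; have := pos_INR m; lra.
have Hx : Rabs x <= INR n * exp (x * x / INR n).
  have Hsq : Rabs x <= 1 + x * x by split_Rabs; nra.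
  have := exp_ineq1_le (x * x / INR n).
  have : INR n * (1 + x * x / INR n) = INR n + x * x by field; lra.
  nra.
have := pow_incr _ _ n (conj (Rabs_pos x) Hx).
rewrite -RPow_abs Rpow_mult_distr exp_pow.
have -> : INR n * (x * x / INR n) = x * x by field; lra.
move=> Hle; apply: Rle_trans (Rmult_le_compat_r _ _ _ (Rlt_le _ _ (exp_pos _)) Hle) _.
by rewrite Rmult_assoc -exp_plus Rplus_opp_r exp_0 Rmult_1_r; right.
Qed.

Lemma poly_gauss_moment_bounded f m :
  poly_gauss f -> exists M, forall x, Rabs (x ^ m * f x) <= M.
Proof.
move=> Pf; elim: Pf m => [|{}f _ IH|{}f g _ IHf _ IHg|c {}f _ IH] m.
- by exists (INR m ^ m); apply: gauss_moment_le.
- have [M HM] := IH m.+1; exists M => x.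
  by have -> : x ^ m * (x * f x) = x ^ m.+1 * f x by rewrite /=; ring.
- have [M1 H1] := IHf m; have [M2 H2] := IHg m; exists (M1 + M2) => x.
  rewrite Rmult_plus_distr_l; apply: Rle_trans (Rabs_triang _ _) _.
  exact: Rplus_le_compat.
- have [M HM] := IH m; exists (Rabs c * M) => x.
  have -> : x ^ m * (c * f x) = c * (x ^ m * f x) by ring.
  by rewrite Rabs_mult; apply/Rmult_le_compat_l/HM/Rabs_pos.
Qed.

Lemma poly_gauss_schwartz f : poly_gauss f -> schwartzR f.
Proof.
move=> Pf; split=> [k|k m]; first by case: (poly_gauss_Derive_n _ k Pf).
have [_ [g Pg ->]] := poly_gauss_Derive_n _ k Pf.
exact: poly_gauss_moment_bounded.
Qed.

Lemma schwartzR_0 : schwartzR (fun _ => 0).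
Proof.
have <- : (fun x => 0 * exp (- (x * x))) = (fun _ => 0).
  by apply: functional_extensionality => x; rewrite Rmult_0_l.
by apply poly_gauss_schwartz, poly_gauss_scal, poly_gauss_base.
Qed.

Lemma schwartzC_0 : schwartzC (fun _ => RtoC 0).
Proof. by split; apply: schwartzR_0. Qed.

Lemma schwartzC_gauss (c : R) : schwartzC (fun x => RtoC (c * exp (- (x * x)))).
Proof.
by split; [apply poly_gauss_schwartz, poly_gauss_scal, poly_gauss_base|apply: schwartzR_0].
Qed.

Lemma schwartzR2_weighted_bounded f :
  schwartzR2 f -> exists K, forall x y, Rabs (f x y) * ((1 + x * x) * (1 + y * y)) <= K.
Proof.
case=> _ Hdec.
have [M1 H1] := Hdec nil 0%nat 0%nat; have [M2 H2] := Hdec nil 2%nat 0%nat.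
have [M3 H3] := Hdec nil 0%nat 2%nat; have [M4 H4] := Hdec nil 2%nat 2%nat.
exists (M1 + M2 + M3 + M4) => x y.
move: (H1 x y) (H2 x y) (H3 x y) (H4 x y) => /=.
rewrite !Rmult_1_r !Rmult_1_l !Rabs_mult.
have -> : Rabs x * Rabs x = x * x by rewrite -Rabs_mult Rabs_pos_eq; nra.
have -> : Rabs y * Rabs y = y * y by rewrite -Rabs_mult Rabs_pos_eq; nra.
nra.
Qed.

Lemma Cmod_le_Re_Im (z : C) : Cmod z <= Rabs (Re z) + Rabs (Im z).
Proof.
have HRe := Rabs_pos (Re z); have HIm := Rabs_pos (Im z).
rewrite /Cmod -[X in _ <= X]sqrt_pow2; last lra.
apply: sqrt_le_1_alt; rewrite -(pow2_abs (fst z)) -(pow2_abs (snd z)) /Re /Im.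
by have := Rabs_pos (fst z); have := Rabs_pos (snd z); nra.
Qed.

Lemma schwartzC2_weighted_bounded (phi : R -> R -> C) :
  schwartzC2 phi -> exists2 K, 0 <= K &
    forall x y, Cmod (phi x y) * ((1 + x * x) * (1 + y * y)) <= K.
Proof.
case=> /schwartzR2_weighted_bounded [K1 H1] /schwartzR2_weighted_bounded [K2 H2].
exists (K1 + K2).
  by have := H1 0 0; have := H2 0 0; have := Rabs_pos (Re (phi 0 0));
    have := Rabs_pos (Im (phi 0 0)); nra.
move=> x y; have := H1 x y; have := H2 x y; have := Cmod_le_Re_Im (phi x y).
have : 0 <= (1 + x * x) * (1 + y * y) by nra.
nra.
Qed.

Lemma RInt_gen_not_ex (f : R -> R) (Fa Fb : (R -> Prop) -> Prop) :
  ~ (exists l, is_RInt_gen f Fa Fb l) -> RInt_gen f Fa Fb = 0.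
Proof.
move=> Hn; rewrite /RInt_gen /Hierarchy.iota /lim /= /R_complete_lim.
set E := fun x : R => _.
have [Hub _] := Lub_Rbar_correct E.
have HE : forall x, E x by move=> x l Hl; case: Hn; exists l.
case: (Lub_Rbar E) Hub => [r| |] Hub //.
by have := Hub (r + 1) (HE _); rewrite /=; lra.
Qed.

Lemma filterlim_at_right_of_continuous (G : R -> R) x :
  continuous G x -> filterlim G (at_right x) (locally (G x)).
Proof.
move=> HG; apply: filterlim_filter_le_1 HG => P HP.
by apply: filter_imp HP => y.
Qed.

Lemma RInt_gen_le_antiderivative (f G : R -> R) (la lb : R) :
  (forall t, 0 < t -> Rabs (f t) <= Derive G t) ->
  (forall t, ex_derive G t) -> (forall t, continuous (Derive G) t) ->
  filterlim G (at_right 0) (locally la) ->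
  filterlim G (Rbar_locally p_infty) (locally lb) ->
  0 <= lb - la ->
  RInt_gen f (at_right 0) (Rbar_locally p_infty) <= lb - la.
Proof.
move=> Hf HG HGc Ha Hb Hab.
case: (classic (exists l, is_RInt_gen f (at_right 0) (Rbar_locally p_infty) l))
  => [[l Hl]|Hn]; last by rewrite RInt_gen_not_ex.
rewrite (is_RInt_gen_unique f l Hl).
have HD : is_RInt_gen (Derive G) (at_right 0) (Rbar_locally p_infty) (lb - la).
  by apply: is_RInt_gen_Derive => //; apply: filter_forall.
have Hpos : filter_prod (at_right 0) (Rbar_locally p_infty)
    (fun ab : R * R => 0 < fst ab /\ fst ab < 1 /\ 1 < snd ab).
  exists (fun u => 0 < u < 1) (fun v => 1 < v); last by move=> u v /= Hu Hv; lra.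
  - exists (mkposreal 1 Rlt_0_1) => u Hu Hu0; split=> //.
    move: Hu; change (Rabs (u - 0) < 1 -> u < 1).
    by rewrite Rminus_0_r; have := Rle_abs u; lra.
  - by exists 1.
apply: Rle_trans (Rle_abs _) _.
apply: (RInt_gen_norm f (Derive G) l (lb - la)) Hl HD.
- by apply: filter_imp Hpos => -[u v] /=; lra.
- by apply: filter_imp Hpos => -[u v] /= Huv x Hx; apply: Hf; lra.
Qed.

Lemma is_lim_inv_1_plus_sq (b : R) :
  0 < b -> is_lim (fun t => / (1 + b * (t * t))) p_infty 0.
Proof.
move=> Hb; apply/filterlim_locally => eps.
exists (Rmax 1 (/ (b * eps))) => t Ht.
have Ht1 := Rle_lt_trans _ _ _ (Rmax_l _ _) Ht.
have Ht2 := Rle_lt_trans _ _ _ (Rmax_r _ _) Ht.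
have He := cond_pos eps.
have Hbt : / eps < b * t.
  have -> : / eps = b * / (b * eps) by field; lra.
  exact: Rmult_lt_compat_l.
have Hden : / eps < 1 + b * (t * t).
  have : b * t <= b * (t * t) by apply: Rmult_le_compat_l; nra.
  lra.
change (Rabs (/ (1 + b * (t * t)) - 0) < eps).
rewrite Rminus_0_r Rabs_pos_eq; last by apply/Rlt_le/Rinv_0_lt_compat; nra.
rewrite -(Rinv_inv eps); apply: Rinv_lt_contravar Hden.
by apply: Rmult_lt_0_compat; [apply: Rinv_0_lt_compat|]; nra.
Qed.

Section RealCase.
Variables (phi : R -> R -> C) (K : R).
Hypothesis K_ge0 : 0 <= K.
Hypothesis phi_weighted_le :
  forall x y, Cmod (phi x y) * ((1 + x * x) * (1 + y * y)) <= K.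

Lemma H_real_integrand_le a c t : 0 <= c <= a * a -> 0 < t ->
  Rabs (Cmod (phi (a * t) (/ t)) / t) <= K * t / ((1 + t * t) * (1 + c * (t * t))).
Proof.
move=> Hc Ht; set P := Cmod _; set D := (1 + t * t) * (1 + c * (t * t)).
have HP : 0 <= P := Cmod_ge_0 _.
have HD : 0 < D by rewrite /D; apply: Rmult_lt_0_compat; nra.
have HDa : D <= (1 + t * t) * (1 + a * a * (t * t)) by apply: Rmult_le_compat_l; nra.
have := phi_weighted_le (a * t) (/ t); rewrite -/P.
have -> : (1 + a * t * (a * t)) * (1 + / t * / t) = (1 + t * t) * (1 + a * a * (t * t)) / (t * t).
  by field; lra.
move=> HK; rewrite Rabs_pos_eq; last by apply: Rdiv_le_0_compat; lra.
have -> : P / t = P * (D / (t * t)) * (t / D) by field; lra.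
have -> : K * t / D = K * (t / D) by field; lra.
apply: Rmult_le_compat_r; first by apply: Rdiv_le_0_compat; lra.
apply: Rle_trans HK; apply: Rmult_le_compat_l => //.
by apply: Rmult_le_compat_r => //; apply/Rlt_le/Rinv_0_lt_compat; nra.
Qed.

Lemma H_real_le_log a c : 0 < c < 1 -> c <= a * a ->
  H_real phi a <= K / (2 * (1 - c)) * - ln c.
Proof.
move=> Hc Hca; set k := K / (2 * (1 - c)).
have Hk : 0 <= k by apply: Rdiv_le_0_compat; lra.
have Hlnc : ln c < 0 by rewrite -ln_1; apply: ln_increasing; lra.
set G := fun t => k * (ln (1 + t * t) - ln (1 + c * (t * t))).
set Gd := fun t => K * t / ((1 + t * t) * (1 + c * (t * t))).
have HDG : forall t, is_derive G t (Gd t).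
  move=> t; have := Rle_0_sqr t; rewrite /Rsqr => Ht.
  rewrite /G /Gd /k; auto_derive; first by split; [nra|split; [nra|]].
  by field; repeat split; nra.
have EG : Derive G = Gd.
  by apply: functional_extensionality => t; apply/is_derive_unique/HDG.
have HGc : forall t, continuous G t.
  by move=> t; apply: ex_derive_continuous; exists (Gd t).
rewrite -[X in _ <= X]Rminus_0_r; apply: (RInt_gen_le_antiderivative _ G).
- by move=> t Ht; rewrite EG; apply: H_real_integrand_le; lra.
- by move=> t; exists (Gd t).
- move=> t; rewrite EG; apply: ex_derive_continuous; rewrite /Gd.
  auto_derive; have := Rle_0_sqr t; rewrite /Rsqr => Ht.
  by apply/Rgt_not_eq/Rmult_lt_0_compat; nra.
- have G0 : G 0 = 0 by rewrite /G !Rmult_0_l Rmult_0_r !Rplus_0_r ln_1; ring.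
  by have := filterlim_at_right_of_continuous _ _ (HGc 0); rewrite G0.
- have EGh : forall t, k * ln (/ c + (1 - / c) * / (1 + c * (t * t))) = G t.
    move=> t; have := Rle_0_sqr t; rewrite /Rsqr => Ht.
    rewrite /G -ln_div; try nra; do 2 f_equal; field; split; nra.
  apply: filterlim_ext EGh _.
  have Hh : is_lim (fun t => / c + (1 - / c) * / (1 + c * (t * t))) p_infty (/ c).
    have := is_lim_scal_l _ (1 - / c) _ _ (is_lim_inv_1_plus_sq _ (proj1 Hc)).
    rewrite /= Rmult_0_r => H0.
    by have := is_lim_plus' _ _ _ _ _ (is_lim_const (/ c) p_infty) H0; rewrite Rplus_0_r.
  rewrite -ln_Rinv; last by lra.
  apply: (filterlim_comp _ _ _ _ (fun y => k * ln y) _ (locally (/ c))); first exact: Hh.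
  by apply: ex_derive_continuous; auto_derive; apply: Rinv_0_lt_compat; lra.
- by rewrite Rminus_0_r; nra.
Qed.

Lemma ln_lt_1_2 : ln 2 < 1.
Proof. by rewrite -(ln_exp 1); apply: ln_increasing; [lra|have := exp_ineq1 1; lra]. Qed.

Lemma H_real_le_const a : 1 / 4 <= a * a -> H_real phi a <= 4 / 3 * K.
Proof.
move=> Ha; have := H_real_le_log a (1 / 4) ltac:(lra) Ha.
have -> : ln (1 / 4) = - (2 * ln 2).
  rewrite /Rdiv Rmult_1_l ln_Rinv; last by lra.
  by replace 4 with (2 * 2) by lra; rewrite ln_mult; lra.
have -> : K / (2 * (1 - 1 / 4)) = 2 / 3 * K by field.
by have := ln_lt_1_2; nra.
Qed.

Lemma H_real_le_abs_ln a : a <> 0 -> a * a < 1 / 4 ->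
  H_real phi a <= 4 / 3 * K * Rabs (ln (Rabs a)).
Proof.
move=> Ha0 Ha; have Hpa : 0 < Rabs a by apply: Rabs_pos_lt.
have Hsq : Rabs a * Rabs a = a * a by rewrite -Rabs_mult Rabs_pos_eq; nra.
have Hlna : ln (Rabs a) < 0 by rewrite -ln_1; apply: ln_increasing => //; nra.
have := H_real_le_log a (a * a) ltac:(nra) (Rle_refl _).
rewrite -Hsq ln_mult // Hsq (Rabs_left _ Hlna).
have Hk : K / (2 * (1 - a * a)) <= 2 / 3 * K by apply/Rle_div_l; nra.
have : K / (2 * (1 - a * a)) * - (ln (Rabs a) + ln (Rabs a))
       <= 2 / 3 * K * - (ln (Rabs a) + ln (Rabs a)) by apply: Rmult_le_compat_r; lra.
lra.
Qed.

End RealCase.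

Lemma H_real_bound (phi : R -> R -> C) : schwartzC2 phi ->
  exists (n : nat) (A B : nat -> R -> C) (Cst : R),
    (forall i : nat, (i <= n)%nat -> schwartzC (A i) /\ schwartzC (B i)) /\
    0 < Cst /\
    forall a : R, a <> 0 ->
      H_real phi a <=
        sum_f_R0 (fun i => Cmod (A i a)) n
        + Rabs (ln (Rabs a)) * sum_f_R0 (fun i => Cmod (B i a)) n + Cst.
Proof.
case/schwartzC2_weighted_bounded => K HK0 HK.
exists 0%nat, (fun _ _ => RtoC 0), (fun _ x => RtoC (2 * K * exp (- (x * x)))), (2 * K + 1).
split; first by move=> i _; split; [apply: schwartzC_0|apply: schwartzC_gauss].
split=> [|a Ha /=]; first lra.
have Hexp := exp_pos (- (a * a)).
rewrite !Cmod_R Rabs_R0 Rplus_0_l (Rabs_pos_eq (2 * K * _)); last by nra.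
have HL := Rabs_pos (ln (Rabs a)).
have HB : 0 <= Rabs (ln (Rabs a)) * (2 * K * exp (- (a * a))).
  by apply: Rmult_le_pos => //; nra.
case: (Rle_lt_dec (1 / 4) (a * a)) => Ha2.
  by have := H_real_le_const _ _ HK0 HK a Ha2; lra.
have := H_real_le_abs_ln _ _ HK0 HK a Ha Ha2.
have : 4 / 3 * K <= 2 * K * exp (- (a * a)).
  by have := exp_ineq1_le (- (a * a)); nra.
by move=> H; have := Rmult_le_compat_l _ _ _ HL H; nra.
Qed.

Lemma sum_n_le_const (u : nat -> R) M k : (forall n, u n <= M) -> sum_n u k <= INR k.+1 * M.
Proof.
move=> Hu; elim: k => [|k IH]; first by rewrite sum_O Rmult_1_l.
by rewrite sum_Sn S_INR Rmult_plus_distr_r Rmult_1_l; apply: Rplus_le_compat.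
Qed.

Lemma Series_le_finite_support (u : nat -> R) N M :
  (forall n, (N <= n)%nat -> u n = 0) -> (forall n, u n <= M) -> Series u <= INR N * M.
Proof.
move=> Hz Hu.
have Htail : forall k, sum_n u (N + k)%nat = sum_n u N.
  by elim=> [|k IH]; rewrite ?addn0 // addnS sum_Sn IH Hz ?plus_zero_r //; lia.
have -> : Series u = sum_n u N.
  apply: is_series_unique; apply: (filterlim_ext_loc (fun _ => sum_n u N)).
    by exists N => n Hn; rewrite -(subnKC (introT leP Hn)) Htail.
  exact: filterlim_const.
case: N Hz {Htail} => [|N] Hz; first by rewrite sum_O Hz //=; lra.
by rewrite sum_Sn Hz // plus_zero_r; apply: sum_n_le_const.
Qed.

Lemma Rlt_inv_swap x y : 0 < x -> 0 < y -> x < / y -> y < / x.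
Proof. by move=> Hx Hy H; rewrite -(Rinv_inv y); apply: Rinv_lt_contravar => //; nra. Qed.

Lemma pow_lt_index_bound (q y : R) : 0 < q < 1 -> 0 < y ->
  exists N : nat, INR N <= Rabs (ln y / ln q) + 1 /\ forall n, (N <= n)%nat -> q ^ n < y.
Proof.
move=> Hq Hy; have Hlnq : ln q < 0 by rewrite -ln_1; apply: ln_increasing; lra.
set X := ln y / ln q; have [Hup1 Hup2] := archimed X.
have HX := Rle_abs X; have HNX := Rle_abs (- X); rewrite Rabs_Ropp in HNX.
have [HN1 HN2] : INR (Z.to_nat (up X)) <= Rabs X + 1 /\ X < INR (Z.to_nat (up X)).
  case: (Z.le_gt_cases 0 (up X)) => Hz.
    by rewrite INR_IZR_INZ Znat.Z2Nat.id //; lra.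
  have -> : Z.to_nat (up X) = 0%nat by lia.
  by have := IZR_lt _ _ Hz; rewrite /=; lra.
exists (Z.to_nat (up X)); split=> // n Hn.
have HnX : X < INR n by apply: Rlt_le_trans HN2 _; apply/le_INR/leP.
have -> : q ^ n = exp (INR n * ln q) by rewrite -Rpower_pow; [|lra].
rewrite -(exp_ln y Hy); apply: exp_increasing.
have -> : ln y = X * ln q by rewrite /X; field; lra.
by nra.
Qed.

Lemma pow_le_1 (x : R) n : 0 <= x <= 1 -> x ^ n <= 1.
Proof. by move=> Hx; rewrite -(pow1 n); apply: pow_incr. Qed.

Lemma pow_le_pow_decr (x : R) m n : 0 <= x <= 1 -> (m <= n)%nat -> x ^ n <= x ^ m.
Proof.
move=> Hx Hmn; rewrite -(subnK Hmn) pow_add Rmult_comm.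
rewrite -[X in _ <= X]Rmult_1_r; apply: Rmult_le_compat_l; first by apply: pow_le; lra.
exact: pow_le_1.
Qed.

Lemma schwartzF_0 (F : fieldType) (abs : F -> R) : schwartzF abs (fun _ => RtoC 0).
Proof. by split=> [x|]; [exists 1; split=> //; lra|exists 0]. Qed.

Lemma list_uniform_bound {A : Type} (L : list A) (Q : A -> R -> Prop) :
  (forall a M M', M <= M' -> Q a M -> Q a M') ->
  (forall a, List.In a L -> exists M, Q a M) -> exists M, forall a, List.In a L -> Q a M.
Proof.
move=> Hmono; elim: L => [|a L IH] Hall; first by exists 0.
have [Ma Ha] := Hall a (or_introl erefl).
have [ML HL] := IH (fun b Hb => Hall b (or_intror Hb)).
exists (Rmax Ma ML) => b [<-|Hb]; first exact: Hmono (Rmax_l _ _) Ha.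
exact: Hmono (Rmax_r _ _) (HL b Hb).
Qed.

Section NonArchimedean.
Variables (F : fieldType) (abs : F -> R).
Hypothesis abs_ge0 : forall x, 0 <= abs x.
Hypothesis abs_eq0 : forall x, abs x = 0 <-> x = 0%R.
Hypothesis absM : forall x y, abs (x * y)%R = abs x * abs y.
Hypothesis abs_ultra : forall x y, abs (x + y)%R <= Rmax (abs x) (abs y).

Lemma abs0 : abs 0%R = 0.
Proof. exact/abs_eq0. Qed.

Lemma abs_gt0 x : x <> 0%R -> 0 < abs x.
Proof. by move=> Hx; case: (abs_ge0 x) => // /esym /abs_eq0. Qed.

Lemma abs1 : abs 1%R = 1.
Proof.
have H1 : abs 1%R <> 0 by move/abs_eq0/eqP; rewrite GRing.oner_eq0.
by apply: (Rmult_eq_reg_l (abs 1%R)) => //; rewrite -absM GRing.mulr1 Rmult_1_r.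
Qed.

Lemma absN x : abs (- x)%R = abs x.
Proof.
have HN1 : abs (-1)%R = 1.
  have := absM (-1)%R (-1)%R; rewrite GRing.mulrNN GRing.mulr1 abs1.
  by have := abs_ge0 (-1)%R; nra.
by rewrite -GRing.mulN1r absM HN1 Rmult_1_l.
Qed.

Lemma abs_distC x y : abs (x - y)%R = abs (y - x)%R.
Proof. by rewrite -absN GRing.opprB. Qed.

Lemma abs_dist_ultra x y z : abs (x - z)%R <= Rmax (abs (x - y)%R) (abs (y - z)%R).
Proof. by rewrite -(GRing.subrKA y); apply: abs_ultra. Qed.

Lemma abs_le_max_dist x y : abs x <= Rmax (abs (x - y)%R) (abs y).
Proof. by rewrite -{1}(GRing.subrK y x); apply: abs_ultra. Qed.

Lemma absV x : x <> 0%R -> abs (x^-1)%R = / abs x.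
Proof.
move=> Hx; have Hax := abs_gt0 _ Hx.
apply: (Rmult_eq_reg_l (abs x)); last lra.
by rewrite -absM GRing.mulfV ?abs1 ?Rinv_r //; [lra|apply/eqP].
Qed.

Lemma absX x n : abs (x ^+ n)%R = abs x ^ n.
Proof. by elim: n => [|n IH]; rewrite ?GRing.expr0 ?abs1 // GRing.exprS absM IH. Qed.

Lemma schwartzF_ball_indicator (r c : R) : 0 < r ->
  schwartzF abs (fun a => RtoC (if Rle_dec (abs a) r then c else 0)).
Proof.
move=> Hr; split=> [x|].
  2: by exists r => x Hx; case: (Rle_dec (abs x) r) => // Hle; exfalso; lra.
rewrite /Defs.dist; case: (Rle_dec (abs x) r) => Hx.
- exists r; split=> // y Hy; case: (Rle_dec (abs y) r) => // [[]].
  have := abs_le_max_dist y x; rewrite abs_distC => H.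
  by apply: Rle_trans H _; apply: Rmax_lub => //; apply: Rlt_le.
- exists (abs x); split=> [|y Hy]; first by have := abs_ge0 x; lra.
  case: (Rle_dec (abs y) r) => // Hy'; case: Hx.
  move: (abs_le_max_dist x y); rewrite /Rmax; case: Rle_dec => _ H.
    exact: Rle_trans H Hy'.
  by case: (Rlt_irrefl (abs x)); apply: Rle_lt_trans H Hy.
Qed.

Hypothesis abs_complete : forall u : nat -> F,
  (forall eps, 0 < eps -> exists N : nat, forall m n : nat,
     (N <= m)%nat -> (N <= n)%nat -> Defs.dist abs (u m) (u n) < eps) ->
  exists l : F, forall eps, 0 < eps -> exists N : nat, forall n : nat,
     (N <= n)%nat -> Defs.dist abs (u n) l < eps.

(* By the ultrametric inequality the tail [u (n + k) - u n] is bounded by the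
   largest increment [B q^n], not by a geometric sum. *)
Lemma geometric_cauchy_cvg (u : nat -> F) B q : 0 <= B -> 0 < q < 1 ->
  (forall n, abs (u n.+1 - u n)%R <= B * q ^ n) ->
  exists l, forall eps, 0 < eps -> exists N : nat, forall n : nat,
    (N <= n)%nat -> abs (u n - l)%R < eps.
Proof.
move=> HB Hq Hu.
have Hq' : 0 <= q <= 1 by lra.
have Htail : forall n k, abs (u (n + k)%N - u n)%R <= B * q ^ n.
  move=> n; elim=> [|k IH]; first by rewrite addn0 GRing.subrr abs0; have := pow_le q n; nra.
  apply: Rle_trans (abs_dist_ultra _ (u (n + k)%N) _) _; apply: Rmax_lub => //.
  rewrite addnS; apply: Rle_trans (Hu _) _; apply: Rmult_le_compat_l => //.
  by apply: pow_le_pow_decr => //; apply: leq_addr.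
have Hdist : forall N m n, (N <= m)%nat -> (m <= n)%nat -> abs (u n - u m)%R <= B * q ^ N.
  move=> N m n HNm Hmn; rewrite -(subnKC Hmn); apply: Rle_trans (Htail _ _) _.
  by apply: Rmult_le_compat_l => //; apply: pow_le_pow_decr.
apply: abs_complete => eps Heps.
have [N HN] : exists N, B * q ^ N < eps.
  have [N HN] := pow_lt_1_zero q ltac:(rewrite Rabs_pos_eq; lra) (eps / (B + 1))
    ltac:(apply: Rdiv_lt_0_compat; lra).
  exists N; have := HN N (le_n N); rewrite Rabs_pos_eq; last by apply: pow_le; lra.
  move=> H; have -> : eps = (B + 1) * (eps / (B + 1)) by field; lra.
  by have := pow_le q N; nra.
exists N => m n Hm Hn; rewrite /Defs.dist.
case: (leqP m n) => Hmn; first by rewrite abs_distC; apply: Rle_lt_trans HN; apply: Hdist Hm _.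
by apply: Rle_lt_trans HN; apply: Hdist Hn (ltnW Hmn).
Qed.

Variable w : F.
Hypothesis w_uniformizer : is_uniformizer abs w.

Lemma abs_w_bounds : 0 < abs w < 1.
Proof. by case: w_uniformizer. Qed.

Lemma w_neq0 : w <> 0%R.
Proof. by move=> Hw; have := abs_w_bounds; rewrite Hw abs0; lra. Qed.

Lemma wX_neq0 n : (w ^+ n)%R <> 0%R.
Proof. exact/eqP/GRing.expf_neq0/eqP/w_neq0. Qed.

Lemma abs_wXV n : abs ((w ^+ n)^-1)%R = / abs w ^ n.
Proof. by rewrite absV ?absX //; apply: wX_neq0. Qed.

Lemma abs_wX_lt_eventually y : 0 < y ->
  exists N : nat, forall n, (N <= n)%nat -> abs w ^ n < y.
Proof.
move=> Hy; have Hw := abs_w_bounds.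
have [N HN] := pow_lt_1_zero (abs w) ltac:(rewrite Rabs_pos_eq; lra) y Hy.
exists N => n /leP /HN; rewrite Rabs_pos_eq //; apply: pow_le; lra.
Qed.

Lemma abs_lt1_le_w z : abs z < 1 -> abs z <= abs w.
Proof.
move=> Hz; have Hw := abs_w_bounds.
case: (classic (z = 0%R)) => [->|/(proj2 w_uniformizer) [k Hk]]; first by rewrite abs0; lra.
move: Hz; rewrite Hk; case: k {Hk} => [|p|p] /=; first lra.
- move=> _; rewrite -[X in _ <= X]pow_1; apply: pow_le_pow_decr; first lra.
  by apply/leP; apply: Pos2Nat.is_pos.
- have H0 := pow_lt _ (Pos.to_nat p) (proj1 Hw).
  have H1 : abs w ^ Pos.to_nat p <= 1 by apply: pow_le_1; lra.
  have : 1 <= / abs w ^ Pos.to_nat p by rewrite -Rinv_1; apply: Rinv_le_contravar.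
  lra.
Qed.

Variable s : list F.
Hypothesis residues_le1 : forall r, List.In r s -> abs r <= 1.
Hypothesis residues_cover :
  forall x, abs x <= 1 -> exists r, List.In r s /\ Defs.dist abs x r < 1.

Lemma ball_residue_cover c v x : v <> 0%R -> abs (x - c)%R <= abs v ->
  exists2 r, List.In r s & abs (x - (c + v * r))%R <= abs (v * w)%R.
Proof.
move=> Hv Hx; have Hav := abs_gt0 _ Hv.
set u := ((x - c) * v^-1)%R.
have Hu : abs u <= 1.
  rewrite /u absM absV //; apply: (Rmult_le_reg_l (abs v)) => //.
  by rewrite Rmult_comm Rmult_assoc Rinv_l; lra.
have [r [Hr Hur]] := residues_cover _ Hu; exists r => //.
have -> : (x - (c + v * r) = v * (u - r))%R.
  rewrite /u GRing.mulrBr GRing.mulrCA GRing.mulfV ?GRing.mulr1; last exact/eqP.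
  by rewrite GRing.opprD GRing.addrA.
by rewrite !absM; apply: Rmult_le_compat_l; [lra|apply: abs_lt1_le_w].
Qed.

Variable phi : F -> F -> C.

Definition bounded_on_ball (c1 c2 v : F) : Prop :=
  exists M, forall x y, abs (x - c1)%R <= abs v -> abs (y - c2)%R <= abs v ->
    Cmod (phi x y) <= M.

(* The ball of radius |v| is covered by the finitely many balls of radius |v w|
   centred at [c + v r] for residues [r], so one of them is unbounded. *)
Lemma unbounded_ball_refine c1 c2 v : v <> 0%R -> ~ bounded_on_ball c1 c2 v ->
  exists c1' c2', ~ bounded_on_ball c1' c2' (v * w)%R /\
    abs (c1' - c1)%R <= abs v /\ abs (c2' - c2)%R <= abs v.
Proof.
move=> Hv Hnb; apply: NNPP => Hn; apply: Hnb.
have Hclose : forall c r, List.In r s -> abs (c + v * r - c)%R <= abs v.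
  move=> c r Hr; rewrite GRing.addrC GRing.addKr absM.
  by have := residues_le1 _ Hr; have := abs_ge0 v; have := abs_ge0 r; nra.
pose Q (p : F * F) M := forall x y,
  abs (x - (c1 + v * p.1))%R <= abs (v * w)%R ->
  abs (y - (c2 + v * p.2))%R <= abs (v * w)%R -> Cmod (phi x y) <= M.
have [|[r1 r2] /List.in_prod_iff [Hr1 Hr2]|M HM] := list_uniform_bound (List.list_prod s s) Q.
- by move=> p M M' HMM' HQ x y Hx Hy; apply: Rle_trans HMM'; apply: HQ.
- apply: NNPP => Hnq; apply: Hn; exists (c1 + v * r1)%R, (c2 + v * r2)%R.
  split; last by split; apply: Hclose.
  by case=> M HM; apply: Hnq; exists M.
- exists M => x y Hx Hy.
  have [r1 Hr1 Hx1] := ball_residue_cover _ _ _ Hv Hx.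
  have [r2 Hr2 Hy2] := ball_residue_cover _ _ _ Hv Hy.
  by apply: (HM (r1, r2)); first exact: List.in_prod.
Qed.

Lemma unbounded_ball_chain c1 c2 v : v <> 0%R -> ~ bounded_on_ball c1 c2 v ->
  exists cs : nat -> F * F, forall n,
    ~ bounded_on_ball (cs n).1 (cs n).2 (v * w ^+ n)%R /\
    abs ((cs n.+1).1 - (cs n).1)%R <= abs v * abs w ^ n /\
    abs ((cs n.+1).2 - (cs n).2)%R <= abs v * abs w ^ n.
Proof.
move=> Hv Hnb.
have Hvn : forall n, (v * w ^+ n)%R <> 0%R.
  by move=> n; apply/eqP/GRing.mulf_neq0/eqP/wX_neq0; apply/eqP.
have step : forall jp : nat * (F * F), exists p : F * F,
    ~ bounded_on_ball jp.2.1 jp.2.2 (v * w ^+ jp.1)%R ->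
    ~ bounded_on_ball p.1 p.2 (v * w ^+ jp.1.+1)%R /\
    abs (p.1 - jp.2.1)%R <= abs v * abs w ^ jp.1 /\
    abs (p.2 - jp.2.2)%R <= abs v * abs w ^ jp.1.
  move=> [j [d1 d2]] /=.
  case: (classic (bounded_on_ball d1 d2 (v * w ^+ j)%R)) => Hb; first by exists (d1, d2).
  have [d1' [d2' Hd]] := unbounded_ball_refine _ _ _ (Hvn j) Hb.
  by exists (d1', d2'); rewrite GRing.exprSr GRing.mulrA -absX -absM.
have [g Hg] := ClassicalEpsilon.choice _ step.
pose cs := fix cs n := if n is n'.+1 then g (n', cs n') else (c1, c2).
have Hcs : forall n, ~ bounded_on_ball (cs n).1 (cs n).2 (v * w ^+ n)%R.
  by elim=> [|n IH]; [rewrite GRing.expr0 GRing.mulr1|apply: (proj1 (Hg (n, cs n) IH))].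
by exists cs => n; split; last exact: (proj2 (Hg (n, cs n) (Hcs n))).
Qed.

Hypothesis phi_locally_constant : forall x1 x2, exists r, 0 < r /\ forall y1 y2,
  Rmax (Defs.dist abs x1 y1) (Defs.dist abs x2 y2) < r -> phi y1 y2 = phi x1 x2.

(* The centres of nested unbounded balls converge, but [phi] is constant near
   the limit. *)
Lemma bounded_on_every_ball c1 c2 v : v <> 0%R -> bounded_on_ball c1 c2 v.
Proof.
move=> Hv; apply: NNPP => /(unbounded_ball_chain _ _ _ Hv) [cs Hcs].
have Hw := abs_w_bounds; have Hv0 := abs_gt0 _ Hv.
have [l1 Hl1] := geometric_cauchy_cvg (fun n => (cs n).1) _ _ (abs_ge0 v) Hw
  (fun n => proj1 (proj2 (Hcs n))).
have [l2 Hl2] := geometric_cauchy_cvg (fun n => (cs n).2) _ _ (abs_ge0 v) Hw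
  (fun n => proj2 (proj2 (Hcs n))).
have [r [Hr Hconst]] := phi_locally_constant l1 l2.
have [N1 HN1] := Hl1 r Hr; have [N2 HN2] := Hl2 r Hr.
have [N3 HN3] := abs_wX_lt_eventually (r / abs v) ltac:(apply: Rdiv_lt_0_compat; lra).
set n := (N1 + N2 + N3)%nat.
have Hrad : abs (v * w ^+ n)%R < r.
  have -> : r = abs v * (r / abs v) by field; lra.
  by rewrite absM absX; apply: Rmult_lt_compat_l => //; apply: HN3; rewrite /n; lia.
apply: (proj1 (Hcs n)); exists (Cmod (phi l1 l2)) => x y Hx Hy.
rewrite Hconst; first by right.
apply: Rmax_lub_lt; rewrite /Defs.dist.
- apply: Rle_lt_trans (abs_dist_ultra _ (cs n).1 _) _; rewrite abs_distC.
  by apply: Rmax_lub_lt; [apply: HN1; rewrite /n; lia|rewrite abs_distC; lra].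
- apply: Rle_lt_trans (abs_dist_ultra _ (cs n).2 _) _; rewrite abs_distC.
  by apply: Rmax_lub_lt; [apply: HN2; rewrite /n; lia|rewrite abs_distC; lra].
Qed.

Lemma exists_abs_gt (R0 : R) : exists2 v, v <> 0%R & R0 < abs v.
Proof.
have Hw := abs_w_bounds; set R1 := Rmax R0 1.
have HR1 : 0 < R1 by have := Rmax_r R0 1; rewrite -/R1; lra.
have [N HN] := abs_wX_lt_eventually (/ R1) (Rinv_0_lt_compat _ HR1).
exists ((w ^+ N)^-1)%R; first by apply/eqP; rewrite GRing.invr_eq0; apply/eqP/wX_neq0.
rewrite absV ?absX; last exact: wX_neq0.
apply: Rle_lt_trans (Rmax_l R0 1) _; rewrite -/R1.
by apply: Rlt_inv_swap => //; [apply: pow_lt; lra|apply: HN].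
Qed.

Lemma locally_constant_bounded (R0 : R) :
  (forall x1 x2, R0 < Rmax (abs x1) (abs x2) -> phi x1 x2 = 0%C) ->
  exists M, forall x y, Cmod (phi x y) <= M.
Proof.
move=> Hsupp; have [v Hv HR0] := exists_abs_gt R0.
have [M HM] := bounded_on_every_ball 0%R 0%R _ Hv.
have Hball : forall x y, Rmax (abs x) (abs y) <= R0 -> Cmod (phi x y) <= M.
  move=> x y Hxy; apply: HM; rewrite GRing.subr0.
    by have := Rmax_l (abs x) (abs y); lra.
  by have := Rmax_r (abs x) (abs y); lra.
exists (Rmax M 0) => x y; case: (Rle_lt_dec (Rmax (abs x) (abs y)) R0) => [Hin|/Hsupp ->].
  exact: Rle_trans (Hball _ _ Hin) (Rmax_l _ _).
by rewrite Cmod_0; apply: Rmax_r.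
Qed.

Section SupportBounds.
Variables (M Rb : R).
Hypothesis phi_le : forall x y, Cmod (phi x y) <= M.
Hypothesis phi_support : forall x1 x2, Rb < Rmax (abs x1) (abs x2) -> phi x1 x2 = 0%C.
Hypothesis Rb_gt0 : 0 < Rb.

Lemma H_na_pos_part_le : exists N : nat, forall a,
  Series (fun n => Cmod (phi (a * w ^+ n)%R (w ^+ n)^-1%R)) <= INR N * M.
Proof.
have Hw := abs_w_bounds.
have [N HN] := abs_wX_lt_eventually (/ Rb) (Rinv_0_lt_compat _ Rb_gt0).
exists N => a; apply: Series_le_finite_support => [n Hn|n]; last exact: phi_le.
rewrite phi_support ?Cmod_0 //; apply: Rlt_le_trans (Rmax_r _ _).
by rewrite abs_wXV; apply: Rlt_inv_swap => //; [apply: pow_lt; lra|apply: HN].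
Qed.

Lemma H_na_neg_part_le0 a : Rb < abs a ->
  Series (fun n => Cmod (phi (a * (w ^+ n.+1)^-1)%R (w ^+ n.+1)%R)) <= 0.
Proof.
move=> Ha; have Hw := abs_w_bounds.
suff Hz : forall n, (0 <= n)%nat -> Cmod (phi (a * (w ^+ n.+1)^-1)%R (w ^+ n.+1)%R) = 0.
  by have := Series_le_finite_support _ 0 M Hz (fun n => phi_le _ _); rewrite Rmult_0_l.
move=> n _; rewrite phi_support ?Cmod_0 //; apply: Rlt_le_trans (Rmax_l _ _).
rewrite absM abs_wXV.
have Hp : 0 < abs w ^ n.+1 <= 1 by split; [apply: pow_lt|apply: pow_le_1]; lra.
have : 1 <= / abs w ^ n.+1 by rewrite -Rinv_1; apply: Rinv_le_contravar; lra.
by have := abs_ge0 a; nra.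
Qed.

Lemma H_na_neg_part_le_log a : a <> 0%R -> abs a <= Rb ->
  Series (fun n => Cmod (phi (a * (w ^+ n.+1)^-1)%R (w ^+ n.+1)%R))
    <= M * ((Rabs (ln (abs a)) + Rabs (ln Rb)) / - ln (abs w) + 1).
Proof.
move=> Ha0 HaRb; have Hw := abs_w_bounds; have Ha := abs_gt0 _ Ha0.
have HM0 : 0 <= M := Rle_trans _ _ _ (Cmod_ge_0 _) (phi_le 0%R 0%R).
have Hlnw : ln (abs w) < 0 by rewrite -ln_1; apply: ln_increasing; lra.
have [N [HNb HN]] := pow_lt_index_bound _ _ Hw (Rdiv_lt_0_compat _ _ Ha Rb_gt0).
have Hz : forall n, (N <= n)%nat ->
    Cmod (phi (a * (w ^+ n.+1)^-1)%R (w ^+ n.+1)%R) = 0.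
  move=> n Hn; rewrite phi_support ?Cmod_0 //; apply: Rlt_le_trans (Rmax_l _ _).
  rewrite absM abs_wXV.
  have Hp : 0 < abs w ^ n.+1 by apply: pow_lt; lra.
  have Hle : abs w ^ n.+1 <= abs w ^ n by apply: pow_le_pow_decr; [lra|apply: leqnSn].
  have Hlt : abs w ^ n * Rb < abs a by apply/(Rlt_div_r _ _ _ Rb_gt0)/HN.
  apply/(Rlt_div_r _ _ _ Hp); rewrite Rmult_comm; apply: Rle_lt_trans Hlt.
  by apply: Rmult_le_compat_r; lra.
apply: Rle_trans (Series_le_finite_support _ N M Hz (fun n => phi_le _ _)) _.
have HX : Rabs (ln (abs a / Rb) / ln (abs w))
          <= (Rabs (ln (abs a)) + Rabs (ln Rb)) / - ln (abs w).
  rewrite ln_div // /Rdiv Rabs_mult Rabs_inv (Rabs_left (ln (abs w))) //.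
  apply: Rmult_le_compat_r; first by apply/Rlt_le/Rinv_0_lt_compat; lra.
  by apply: Rle_trans (Rabs_triang _ _) _; rewrite Rabs_Ropp; lra.
by rewrite Rmult_comm; apply: Rmult_le_compat_l => //; lra.
Qed.

End SupportBounds.

Variable R0 : R.
Hypothesis phi_support : forall x1 x2, R0 < Rmax (abs x1) (abs x2) -> phi x1 x2 = 0%C.

Lemma H_na_le_log :
  exists (n : nat) (A B : nat -> F -> C) (Cst : R),
    (forall i : nat, (i <= n)%nat -> schwartzF abs (A i) /\ schwartzF abs (B i)) /\
    0 < Cst /\
    forall a : F, a <> 0%R ->
      H_na w phi a <=
        sum_f_R0 (fun i => Cmod (A i a)) n
        + Rabs (ln (abs a)) * sum_f_R0 (fun i => Cmod (B i a)) n + Cst.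
Proof.
have [M HM] := locally_constant_bounded _ phi_support.
have HM0 : 0 <= M := Rle_trans _ _ _ (Cmod_ge_0 _) (HM 0%R 0%R).
set Rb := Rmax R0 1; set L := - ln (abs w).
have HRb : 0 < Rb by have := Rmax_r R0 1; rewrite -/Rb; lra.
have Hsupp : forall x1 x2, Rb < Rmax (abs x1) (abs x2) -> phi x1 x2 = 0%C.
  by move=> x1 x2 Hx; apply: phi_support; have := Rmax_l R0 1; rewrite -/Rb; lra.
have HL : 0 < L.
  by have [Hw0 Hw1] := abs_w_bounds; have := ln_increasing _ _ Hw0 Hw1; rewrite ln_1 /L; lra.
have [N HN] := H_na_pos_part_le _ _ HM Hsupp HRb.
exists 0%nat, (fun _ _ => RtoC 0),
  (fun _ a => RtoC (if Rle_dec (abs a) Rb then M / L else 0)),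
  (INR N * M + M * (Rabs (ln Rb) / L + 1) + 1).
split; first by move=> i _; split; [apply: schwartzF_0|apply: schwartzF_ball_indicator].
have HNM : 0 <= INR N * M by have := pos_INR N; nra.
have HMR : 0 <= M * (Rabs (ln Rb) / L + 1).
  apply: Rmult_le_pos => //; apply: Rplus_le_le_0_compat; last lra.
  by apply: Rdiv_le_0_compat; [apply: Rabs_pos|lra].
split=> [|a Ha /=]; first lra.
rewrite /H_na !Cmod_R Rabs_R0 Rplus_0_l; have := HN a.
case: (Rle_dec (abs a) Rb) => HaRb.
- move=> Hpos; have := H_na_neg_part_le_log _ _ HM Hsupp HRb _ Ha HaRb; rewrite -/L => Hneg.
  rewrite /= (Rabs_pos_eq (M / L)); last by apply: Rdiv_le_0_compat; lra.
  have E : M * ((Rabs (ln (abs a)) + Rabs (ln Rb)) / L + 1)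
            = Rabs (ln (abs a)) * (M / L) + M * (Rabs (ln Rb) / L + 1) by field; lra.
  lra.
- have := H_na_neg_part_le0 _ _ HM Hsupp HRb _ (Rnot_le_lt _ _ HaRb).
  by rewrite /= Rabs_R0 Rmult_0_r; lra.
Qed.

End NonArchimedean.

Theorem lemma4p3 :
  (* F = R *)
  (forall phi : R -> R -> C, schwartzC2 phi ->
     exists (n : nat) (A B : nat -> R -> C) (Cst : R),
       (forall i : nat, (i <= n)%nat -> schwartzC (A i) /\ schwartzC (B i)) /\
       0 < Cst /\
       forall a : R, a <> 0 ->
         H_real phi a <=
           sum_f_R0 (fun i => Cmod (A i a)) n
           + Rabs (ln (Rabs a)) * sum_f_R0 (fun i => Cmod (B i a)) n + Cst)
  /\
  (* F non-archimedean local field of characteristic zero *)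
  (forall (F : fieldType) (abs : F -> R),
     is_na_local_field abs -> char_zero F ->
     forall w : F, is_uniformizer abs w ->
     forall phi : F -> F -> C, schwartzF2 abs phi ->
     exists (n : nat) (A B : nat -> F -> C) (Cst : R),
       (forall i : nat, (i <= n)%nat -> schwartzF abs (A i) /\ schwartzF abs (B i)) /\
       0 < Cst /\
       forall a : F, a <> (@GRing.zero F) ->
         H_na w phi a <=
           sum_f_R0 (fun i => Cmod (A i a)) n
           + Rabs (ln (abs a)) * sum_f_R0 (fun i => Cmod (B i a)) n + Cst).
Proof.
split; first exact: H_real_bound.
move=> F abs [abs_ge0 [abs_eq0 [absM [abs_ultra [_ [abs_complete [s [Hs1 Hs]]]]]]]] _.
move=> w Hw phi [Hlc [R0 Hsupp]].
exact: (H_na_le_log _ _ abs_ge0 abs_eq0 absM abs_ultra abs_complete _ Hw _ Hs1 Hs _ Hlc _ Hsupp).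
Qed.
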